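(* Let $R=E[\eta(X)\eta(X)^\top]$ and $m=\sup_{x\in[0,1]^D}|\eta(x)|_2^2$ for the piecewise Legendre basis $\eta$ of the context, and assume $Q=0$, or $Q\in\mathbb{N}$ satisfies $$2\binom{D+Q}{D}e^{2Q}\le\frac{f_*}{\varpi(1/N)}.$$ Then $\lambda_{\min}(R)\ge f_*/2$, $\lambda_{\max}(R)\le\frac32f^*$, and $m\le N^De^{2Q}\binom{D+Q}{D}$.
   Context: $X$ is an $\mathbb{R}^D$-valued random variable with Lebesgue density $f\mathbf 1_{[0,1]^D}$, where $f$ is continuous and strictly positive on $[0,1]^D$. Let $f_*=\inf_{[0,1]^D}f$, $f^*=\sup_{[0,1]^D}f$, $\varpi(h)=\sup\{|f(x)-f(z)|:x,z\in[0,1]^D,|x-z|_\infty\le h\}$ (if $\varpi(1/N)=0$ the displayed condition is considered satisfied). For $N\in\mathbb{N}$ and $\mathbf i\in\{0,\dots,N-1\}^D$ let $C_{\mathbf i}=\prod_d(i_d/N,(i_d+1)/N]$. $\mathcal{L}_q$ is the Legendre polynomial of degree $q$ normalized by $\mathcal{L}_q(1)=1$. For $\mathbf j\in\mathbb{N}_0^D$, $p_{\mathbf j,\mathbf i}(x)=N^{D/2}\prod_{d=1}^D\sqrt{2j_d+1}\,\mathcal{L}_{j_d}(2(Nx_d-i_d)-1)$. For fixed $Q\in\mathbb{N}_0$, the basis consists of the $K=N^D\binom{D+Q}{D}$ functions $\eta_{\mathbf i,\mathbf j}=p_{\mathbf j,\mathbf i}\mathbf 1_{C_{\mathbf i}}$,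 $\mathbf i\in\{0,\dots,N-1\}^D$, $|\mathbf j|_1\le Q$, arranged in some fixed order into the vector $\eta$. *)

From Stdlib Require Import Reals Lra List.
Import ListNotations.
Open Scope R_scope.

(* Points of R^D are functions nat -> R; only coordinates 0..D-1 matter,
   and points of the cube [0,1]^D have all other coordinates equal to 0. *)
Definition in_cube (D : nat) (x : nat -> R) : Prop :=
  (forall d, (d < D)%nat -> 0 <= x d <= 1) /\ (forall d, (D <= d)%nat -> x d = 0).

(* Legendre polynomials, normalized by L_q(1) = 1 (Bonnet recurrence). *)
Fixpoint legendre2 (n : nat) (t : R) : R * R :=
  (* returns (L_n t, L_{n+1} t) *)
  match n with
  | O => (1, t)
  | S k => let (a, b) := legendre2 k t in
           (b, ((2 * INR k + 3) * t * b - (INR k + 1) * a) / (INR k + 2))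
  end.
Definition legendre (n : nat) (t : R) : R := fst (legendre2 n t).

Fixpoint tuples (D M : nat) : list (list nat) :=
  match D with
  | O => [[]]
  | S D' => flat_map (fun k => map (cons k) (tuples D' M)) (seq 0 M)
  end.

Definition sumn_list (l : list nat) : nat := fold_right Nat.add 0%nat l.

Definition basis_idx (D N Q : nat) : list (list nat * list nat) :=
  list_prod (tuples D N) (filter (fun j => Nat.leb (sumn_list j) Q) (tuples D (S Q))).

Definition prodD (D : nat) (g : nat -> R) : R := fold_right Rmult 1 (map g (seq 0 D)).

Definition sumL {A : Type} (l : list A) (g : A -> R) : R :=
  fold_right Rplus 0 (map g l).

Definition ind_oc (a b t : R) : R :=
  if Rlt_dec a t then (if Rle_dec t b then 1 else 0) else 0.

Definition eta (D N : nat) (ij : list nat * list nat) (x : nat -> R) : R :=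
  let (i, j) := ij in
  sqrt (INR N ^ D) *
  prodD D (fun d =>
    sqrt (2 * INR (nth d j 0%nat) + 1) *
    legendre (nth d j 0%nat) (2 * (INR N * x d - INR (nth d i 0%nat)) - 1) *
    ind_oc (INR (nth d i 0%nat) / INR N) (INR (S (nth d i 0%nat)) / INR N) (x d)).

(* Riemann sum of F over [0,1]^D on the uniform grid with M^D cells,
   tags at the upper corners of the cells *)
Definition riemann_sum (D M : nat) (F : (nat -> R) -> R) : R :=
  (/ INR M) ^ D *
  sumL (tuples D M)
    (fun k => F (fun d => if Nat.ltb d D then INR (S (nth d k 0%nat)) / INR M else 0)).

(* I is the integral of F over [0,1]^D (as limit of Riemann sums) *)
Definition is_cube_integral (D : nat) (F : (nat -> R) -> R) (I : R) : Prop :=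
  Un_cv (fun M => riemann_sum D (S M) F) I.

Definition continuous_on_cube (D : nat) (f : (nat -> R) -> R) : Prop :=
  forall x, in_cube D x -> forall eps, eps > 0 -> exists delta, delta > 0 /\
    forall z, in_cube D z -> (forall d, (d < D)%nat -> Rabs (x d - z d) < delta) ->
      Rabs (f x - f z) < eps.

(* Every basis function factorises over coordinates,
     eta_{i,j}(x) = sqrt(N^D) * prod_d cell_factor N i_d j_d (x_d),
     cell_factor N k q t = sqrt(2q+1) L_q(2(Nt-k)-1) 1_{(k/N,(k+1)/N]}(t).
   The file proceeds in four steps.
   1. Legendre polynomials: the energy inequality for the three-term
      recurrence gives |L_q| <= 1 on (-1,1]; the moments int t^m L_n are
      computed in closed form from the recurrence, which yields the
      orthogonality relations int L_n L_m = delta_{nm} 2/(2n+1).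
   2. One-dimensional Riemann sums on the uniform grid converge to the
      integral; pulling back to a cell (k/N,(k+1)/N] and using the
      disjointness of cells, the Riemann sums of eta_a eta_b over [0,1]^D
      (a product of one-dimensional ones) tend to the Kronecker delta.
   3. Eigenvalues: if R v = lam v and W = sum_a v_a eta_a, the Riemann sums
      of W^2 f and W^2 tend to lam |v|^2 and |v|^2, so f_* <= lam <= f^*.
      This is sharper than the stated f_*/2 <= lam <= 3/2 f^*. Sup bound: at most one cell contains x_d, L_q^2 <= 1 there,
      prod_d (2 j_d + 1) <= exp(2 |j|_1) <= e^{2Q}, and the number of
      multi-indices with |j|_1 <= Q is C(D+Q, D) (hockey-stick identity). *)

From Stdlib Require Import Reals List Lra Lia Factorial ZArith.
From Coquelicot Require Coquelicot.
Open Scope R_scope.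

Lemma sumL_cons {A} (x : A) l g : sumL (x :: l) g = g x + sumL l g.
Proof. reflexivity. Qed.

Lemma sumL_app {A} (l1 l2 : list A) g : sumL (l1 ++ l2) g = sumL l1 g + sumL l2 g.
Proof. induction l1; simpl app; [unfold sumL; simpl; lra|]. rewrite !sumL_cons, IHl1; lra. Qed.

Lemma sumL_ext {A} (l : list A) g h :
  (forall x, In x l -> g x = h x) -> sumL l g = sumL l h.
Proof.
  induction l; intros H; [reflexivity|].
  rewrite !sumL_cons, H, IHl; [reflexivity | intros; apply H |]; simpl; auto.
Qed.

Lemma sumL_le {A} (l : list A) g h :
  (forall x, In x l -> g x <= h x) -> sumL l g <= sumL l h.
Proof.
  induction l; intros H; [unfold sumL; simpl; lra|]. rewrite !sumL_cons.
  assert (g a <= h a) by (apply H; simpl; auto).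
  assert (sumL l g <= sumL l h) by (apply IHl; intros; apply H; simpl; auto). lra.
Qed.

Lemma sumL_plus {A} (l : list A) g h : sumL l (fun x => g x + h x) = sumL l g + sumL l h.
Proof. induction l; [unfold sumL; simpl; lra|]. rewrite !sumL_cons, IHl; lra. Qed.

Lemma sumL_scal {A} (l : list A) c g : sumL l (fun x => c * g x) = c * sumL l g.
Proof. induction l; [unfold sumL; simpl; lra|]. rewrite !sumL_cons, IHl; lra. Qed.

Lemma sumL_mult_r {A} (l : list A) g c : sumL l g * c = sumL l (fun x => g x * c).
Proof. rewrite Rmult_comm, <- sumL_scal. apply sumL_ext; intros; ring. Qed.

Lemma sumL_zero {A} (l : list A) : sumL l (fun _ => 0) = 0.
Proof. induction l; [reflexivity|]. rewrite sumL_cons, IHl; lra. Qed.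

Lemma sumL_const {A} (l : list A) c : sumL l (fun _ => c) = INR (length l) * c.
Proof. induction l; [unfold sumL; simpl; lra|]. rewrite sumL_cons, IHl. simpl length. rewrite S_INR. lra. Qed.

Lemma sumL_map {A B} (f : A -> B) l g : sumL (map f l) g = sumL l (fun x => g (f x)).
Proof. induction l; [reflexivity|]. simpl map. rewrite !sumL_cons, IHl; reflexivity. Qed.

Lemma sumL_flat_map {A B} (f : A -> list B) l g :
  sumL (flat_map f l) g = sumL l (fun x => sumL (f x) g).
Proof. induction l; [reflexivity|]. simpl flat_map. rewrite sumL_app, sumL_cons, IHl; reflexivity. Qed.

Lemma sumL_filter {A} (p : A -> bool) l g :
  sumL (filter p l) g = sumL l (fun x => if p x then g x else 0).
Proof.
  induction l; [reflexivity|]. simpl filter.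
  destruct (p a) eqn:E; rewrite ?sumL_cons, IHl, ?E; lra.
Qed.

Lemma sumL_list_prod {A B} (l1 : list A) (l2 : list B) g :
  sumL (list_prod l1 l2) g = sumL l1 (fun x => sumL l2 (fun y => g (x, y))).
Proof.
  induction l1; [reflexivity|]. simpl list_prod.
  rewrite sumL_app, sumL_cons, IHl1, sumL_map; reflexivity.
Qed.

Lemma sumL_swap {A B} (l1 : list A) (l2 : list B) h :
  sumL l1 (fun x => sumL l2 (fun y => h x y)) = sumL l2 (fun y => sumL l1 (fun x => h x y)).
Proof.
  induction l1; simpl; [symmetry; apply sumL_zero|].
  change (sumL l2 (fun y => h a y) + sumL l1 (fun x => sumL l2 (fun y => h x y)) =
    sumL l2 (fun y => sumL (a :: l1) (fun x => h x y))).
  rewrite IHl1, <- sumL_plus. apply sumL_ext; intros; rewrite sumL_cons; reflexivity.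
Qed.

Lemma sumL_nonneg {A} (l : list A) g : (forall x, In x l -> 0 <= g x) -> 0 <= sumL l g.
Proof. intros H; rewrite <- (sumL_zero l). apply sumL_le; auto. Qed.

Lemma sumL_pos {A} (l : list A) g a :
  (forall x, In x l -> 0 <= g x) -> In a l -> 0 < g a -> 0 < sumL l g.
Proof.
  induction l; intros H Ha Hg; [destruct Ha|]. rewrite sumL_cons.
  assert (0 <= g a0) by (apply H; simpl; auto).
  assert (0 <= sumL l g) by (apply sumL_nonneg; intros; apply H; simpl; auto).
  destruct Ha as [->|Ha]; [lra|].
  assert (0 < sumL l g) by (apply IHl; auto; intros; apply H; simpl; auto). lra.
Qed.

Lemma sumL_delta {A} (dec : forall a b : A, {a = b} + {a <> b}) (l : list A) g a :
  NoDup l -> In a l -> sumL l (fun b => g b * (if dec a b then 1 else 0)) = g a.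
Proof.
  induction l; intros Hnd Ha; [destruct Ha|]. inversion Hnd; subst. rewrite sumL_cons.
  destruct Ha as [->|Ha].
  - destruct (dec a a) as [_|]; [|congruence].
    rewrite (sumL_ext _ _ (fun _ => 0)), sumL_zero; [ring|].
    intros x Hx. destruct (dec a x) as [->|]; [contradiction|ring].
  - destruct (dec a a0) as [->|]; [contradiction|]. rewrite IHl; auto. ring.
Qed.

Lemma sumL_seq (f : nat -> R) n : sumL (seq 0 (S n)) f = sum_f_R0 f n.
Proof.
  induction n; [unfold sumL; simpl; lra|].
  rewrite seq_S, sumL_app, IHn. simpl. unfold sumL; simpl. lra.
Qed.

Lemma sumL_cv {A} (l : list A) (u : A -> nat -> R) (L : A -> R) :
  (forall a, In a l -> Un_cv (u a) (L a)) ->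
  Un_cv (fun n => sumL l (fun a => u a n)) (sumL l L).
Proof.
  induction l; intros H.
  - intros e He; exists 0%nat; intros; unfold R_dist; simpl.
    rewrite Rminus_diag, Rabs_R0; lra.
  - apply (CV_plus (fun n => u a n) (fun n => sumL l (fun a => u a n)));
      [apply H | apply IHl; intros; apply H]; simpl; auto.
Qed.

Lemma cv_const c : Un_cv (fun _ => c) c.
Proof. intros e He; exists 0%nat; intros; unfold R_dist; rewrite Rminus_diag, Rabs_R0; lra. Qed.

Lemma cv_scal c u l : Un_cv u l -> Un_cv (fun n => c * u n) (c * l).
Proof. intros H. apply CV_mult; auto. apply cv_const. Qed.

Lemma prodD_S D g : prodD (S D) g = g 0%nat * prodD D (fun d => g (S d)).
Proof. unfold prodD. simpl. f_equal. rewrite <- seq_shift, map_map. reflexivity. Qed.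

Lemma prodD_ext D g h : (forall d, (d < D)%nat -> g d = h d) -> prodD D g = prodD D h.
Proof.
  revert g h; induction D; intros g h H; [reflexivity|].
  rewrite !prodD_S, H by lia. f_equal. apply IHD; intros; apply H; lia.
Qed.

Lemma prodD_mult D g h : prodD D (fun d => g d * h d) = prodD D g * prodD D h.
Proof. revert g h; induction D; intros g h; [unfold prodD; simpl; lra|]. rewrite !prodD_S, IHD. ring. Qed.

Lemma prodD_const D c : prodD D (fun _ => c) = c ^ D.
Proof. induction D; [reflexivity|]. rewrite prodD_S, IHD; simpl; ring. Qed.

Lemma prodD_nonneg D g : (forall d, (d < D)%nat -> 0 <= g d) -> 0 <= prodD D g.
Proof.
  revert g; induction D; intros g H; [unfold prodD; simpl; lra|].
  rewrite prodD_S. apply Rmult_le_pos; [apply H | apply IHD; intros; apply H]; lia.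
Qed.

Lemma prodD_le D g h : (forall d, (d < D)%nat -> 0 <= g d <= h d) -> prodD D g <= prodD D h.
Proof.
  revert g h; induction D; intros g h H; [unfold prodD; simpl; lra|].
  rewrite !prodD_S. apply Rmult_le_compat.
  - apply H; lia.
  - apply prodD_nonneg; intros; apply H; lia.
  - apply H; lia.
  - apply IHD; intros; apply H; lia.
Qed.

Lemma prodD_zero D g d0 : (d0 < D)%nat -> g d0 = 0 -> prodD D g = 0.
Proof.
  revert g d0; induction D; intros g d0 Hd H; [lia|]. rewrite prodD_S.
  destruct d0; [rewrite H; ring|]. rewrite (IHD (fun d => g (S d)) d0); [ring|lia|auto].
Qed.

Lemma prodD_cv D (u : nat -> nat -> R) (L : nat -> R) :
  (forall d, (d < D)%nat -> Un_cv (u d) (L d)) ->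
  Un_cv (fun n => prodD D (fun d => u d n)) (prodD D L).
Proof.
  revert u L; induction D; intros u L H; [exact (cv_const 1)|].
  rewrite prodD_S. eapply Un_cv_ext with (fun n => u 0%nat n * prodD D (fun d => u (S d) n)).
  - intros n; rewrite prodD_S; reflexivity.
  - apply CV_mult; [apply H; lia|].
    apply (IHD (fun d => u (S d)) (fun d => L (S d))). intros; apply H; lia.
Qed.

Lemma tuples_S D M : tuples (S D) M = flat_map (fun k => map (cons k) (tuples D M)) (seq 0 M).
Proof. reflexivity. Qed.

Lemma sumL_tuples_prod D M (g : nat -> nat -> R) :
  sumL (tuples D M) (fun k => prodD D (fun d => g d (nth d k 0%nat))) =
  prodD D (fun d => sumL (seq 0 M) (g d)).
Proof.
  revert g; induction D; intros g; [unfold sumL, prodD; simpl; lra|].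
  rewrite tuples_S, sumL_flat_map, prodD_S, <- (IHD (fun d => g (S d))).
  rewrite Rmult_comm, <- sumL_scal. apply sumL_ext; intros k _.
  rewrite sumL_map, Rmult_comm, <- sumL_scal. apply sumL_ext; intros t _.
  rewrite prodD_S. reflexivity.
Qed.

Lemma tuples_spec D M k : In k (tuples D M) ->
  length k = D /\ forall d, (d < D)%nat -> (nth d k 0 < M)%nat.
Proof.
  revert k; induction D; intros k Hk.
  - destruct Hk as [<-|[]]. split; [reflexivity | intros; lia].
  - rewrite tuples_S in Hk. apply in_flat_map in Hk as [a [Ha Hk]].
    apply in_map_iff in Hk as [t [<- Ht]]. apply in_seq in Ha.
    destruct (IHD t Ht) as [H1 H2]. split; [simpl; lia|].
    intros [|d] Hd; simpl; [lia | apply H2; lia].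
Qed.

Lemma NoDup_flat_map_inj {A B Z} (f : A -> B -> Z) (l : list A) (T : list B) :
  NoDup l -> NoDup T ->
  (forall a a' t t', f a t = f a' t' -> a = a' /\ t = t') ->
  NoDup (flat_map (fun k => map (f k) T) l).
Proof.
  intros Hl HT Hf. induction l as [|a l IH]; simpl; [constructor|].
  inversion Hl; subst. apply NoDup_app.
  - apply NoDup_map_NoDup_ForallPairs; auto.
    intros t t' _ _ E. apply Hf in E as [_ E]. exact E.
  - apply IH; auto.
  - intros x Hx Hx'. apply in_map_iff in Hx as [t [<- _]].
    apply in_flat_map in Hx' as [a' [Ha' Hx']]. apply in_map_iff in Hx' as [t' [E _]].
    apply Hf in E as [-> _]. auto.
Qed.

Lemma NoDup_tuples D M : NoDup (tuples D M).
Proof.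
  induction D; [simpl; constructor; [auto | constructor]|].
  rewrite tuples_S. apply NoDup_flat_map_inj; auto; [apply seq_NoDup|].
  intros a a' t t' E; injection E; auto.
Qed.

Lemma basis_spec D N Q a : In a (basis_idx D N Q) ->
  In (fst a) (tuples D N) /\ In (snd a) (tuples D (S Q)) /\ (sumn_list (snd a) <= Q)%nat.
Proof.
  destruct a as [i j]. unfold basis_idx. rewrite in_prod_iff. intros [Hi Hj].
  apply filter_In in Hj as [Hj Hs]. apply Nat.leb_le in Hs. auto.
Qed.

Lemma NoDup_basis D N Q : NoDup (basis_idx D N Q).
Proof.
  unfold basis_idx. assert (E : forall A B (l1 : list A) (l2 : list B),
    list_prod l1 l2 = flat_map (fun x => map (pair x) l2) l1).
  { induction l1; simpl; intros; [reflexivity|]. rewrite IHl1; reflexivity. }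
  rewrite E. apply NoDup_flat_map_inj; [apply NoDup_tuples | apply NoDup_filter, NoDup_tuples |].
  intros a a' t t' H; injection H; auto.
Qed.

Definition idx_eq_dec (a b : list nat * list nat) : {a = b} + {a <> b}.
Proof. repeat decide equality. Defined.

Lemma list_diff (l1 l2 : list nat) : length l1 = length l2 -> l1 <> l2 ->
  exists d, (d < length l1)%nat /\ nth d l1 0%nat <> nth d l2 0%nat.
Proof.
  revert l2; induction l1; intros [|b l2] Hl Hne; simpl in *; try lia; [congruence|].
  destruct (Nat.eq_dec a b) as [->|Hab].
  - destruct (IHl1 l2) as [d [H1 H2]]; try lia; [congruence|]. exists (S d); split; auto; lia.
  - exists 0%nat; split; auto; lia.
Qed.

Lemma prodD_delta D (i1 i2 j1 j2 : list nat) :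
  length i1 = D -> length i2 = D -> length j1 = D -> length j2 = D ->
  prodD D (fun d => if (Nat.eqb (nth d i1 0%nat) (nth d i2 0%nat) &&
                        Nat.eqb (nth d j1 0%nat) (nth d j2 0%nat))%bool then 1 else 0)
  = if idx_eq_dec (i1, j1) (i2, j2) then 1 else 0.
Proof.
  intros H1 H2 H3 H4. destruct (idx_eq_dec (i1, j1) (i2, j2)) as [E|E].
  - injection E; intros -> ->. rewrite (prodD_ext _ _ (fun _ => 1)), prodD_const, pow1; auto.
    intros; rewrite !Nat.eqb_refl; reflexivity.
  - destruct (list_eq_dec Nat.eq_dec i1 i2) as [->|Hi].
    + destruct (list_diff j1 j2) as [d [Hd Hn]]; try congruence.
      apply (prodD_zero _ _ d); [lia|].
      apply Nat.eqb_neq in Hn. rewrite Hn, Bool.andb_false_r. reflexivity.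
    + destruct (list_diff i1 i2) as [d [Hd Hn]]; try congruence.
      apply (prodD_zero _ _ d); [lia|]. apply Nat.eqb_neq in Hn. rewrite Hn. reflexivity.
Qed.

(** * Counting multi-indices: #{ j in N_0^D : |j|_1 <= s } = C(D+s, D) *)

Lemma C_diag n : C n n = 1.
Proof.
  unfold C. rewrite Nat.sub_diag. simpl (fact 0). rewrite Rmult_1_r.
  field. apply INR_fact_neq_0.
Qed.

Lemma C_n0 n : C n 0 = 1.
Proof.
  unfold C. rewrite Nat.sub_0_r. simpl (fact 0). rewrite Rmult_1_l.
  field. apply INR_fact_neq_0.
Qed.

Lemma hockey_stick D s : sum_f_R0 (fun k => C (D + (s - k)) D) s = C (S D + s) (S D).
Proof.
  induction s; [simpl; rewrite Nat.add_0_r, !C_diag; reflexivity|].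
  rewrite decomp_sum by lia. simpl pred.
  rewrite (sum_eq _ (fun k => C (D + (s - k)) D)) by (intros; f_equal).
  rewrite IHs, Nat.sub_0_r.
  replace (S D + s)%nat with (D + S s)%nat by lia.
  replace (S D + S s)%nat with (S (D + S s)) by lia.
  apply pascal. lia.
Qed.

(* Induction on D: fixing the first coordinate k <= s leaves |j'|_1 <= s - k. *)
Lemma count_tuples D M s : (s < M)%nat ->
  sumL (tuples D M) (fun j => if Nat.leb (sumn_list j) s then 1 else 0) = C (D + s) D.
Proof.
  revert s; induction D; intros s Hs; [unfold sumL; simpl; rewrite C_n0; lra|].
  rewrite tuples_S, sumL_flat_map.
  rewrite (sumL_ext _ _ (fun k => if Nat.leb k s then C (D + (s - k)) D else 0)).
  2:{ intros k _. rewrite sumL_map. cbn [sumn_list fold_right].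
      destruct (Nat.leb_spec k s).
      - rewrite <- IHD by lia. apply sumL_ext; intros t _. fold (sumn_list t).
        destruct (Nat.leb_spec (k + sumn_list t) s), (Nat.leb_spec (sumn_list t) (s - k));
          auto; lia.
      - transitivity (sumL (tuples D M) (fun _ => 0)); [|apply sumL_zero].
        apply sumL_ext; intros t _. fold (sumn_list t).
        destruct (Nat.leb_spec (k + sumn_list t) s); [lia|reflexivity]. }
  replace M with (S s + (M - S s))%nat by lia.
  rewrite seq_app, sumL_app.
  rewrite (sumL_ext (seq (0 + S s) _) _ (fun _ => 0)), sumL_zero, Rplus_0_r.
  2:{ intros k Hk. apply in_seq in Hk. destruct (Nat.leb_spec k s); auto; lia. }
  rewrite sumL_seq, (sum_eq _ (fun k => C (D + (s - k)) D)).
  2:{ intros i Hi. destruct (Nat.leb_spec i s); auto; lia. }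
  rewrite hockey_stick. f_equal; lia.
Qed.

(** * Legendre polynomials: recurrence, bound, monomial expansion *)

Lemma legendre_0 t : legendre 0 t = 1.
Proof. reflexivity. Qed.

Lemma legendre_1 t : legendre 1 t = t.
Proof. reflexivity. Qed.

Lemma legendre_rec n t : legendre (S (S n)) t =
  ((2 * INR n + 3) * t * legendre (S n) t - (INR n + 1) * legendre n t) / (INR n + 2).
Proof. unfold legendre. simpl. destruct (legendre2 n t) as [a b]. reflexivity. Qed.

Lemma legendre_at_1 n : legendre n 1 = 1 /\ legendre (S n) 1 = 1.
Proof.
  induction n as [|n [H1 H2]]; [split; reflexivity|]. split; auto.
  rewrite legendre_rec, H1, H2. field. pose proof (pos_INR n). lra.
Qed.

(* Energy inequality: E_n = (L_n - t L_{n+1})^2 + (1-t^2) L_{n+1}^2 <= 1 - t^2 on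
   [-1,1]; the recurrence gives E_{n+1} = ((n+1)/(n+2))^2 (L_n - t L_{n+1})^2
   + (1-t^2) L_{n+1}^2 <= E_n. *)
Lemma legendre_energy n t : -1 <= t <= 1 ->
  (legendre n t - t * legendre (S n) t)^2 + (1 - t^2) * (legendre (S n) t)^2 <= 1 - t^2.
Proof.
  intros Ht. induction n; [rewrite legendre_0, legendre_1; nra|].
  set (a := legendre n t) in *. set (b := legendre (S n) t) in *.
  rewrite legendre_rec. fold a b.
  pose proof (pos_INR n) as Hn.
  set (r := (INR n + 1) / (INR n + 2)).
  assert (E : (b - t * (((2 * INR n + 3) * t * b - (INR n + 1) * a) / (INR n + 2)))^2 +
    (1 - t^2) * (((2 * INR n + 3) * t * b - (INR n + 1) * a) / (INR n + 2))^2 =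
    r^2 * (a - t * b)^2 + (1 - t^2) * b^2) by (unfold r; field; lra).
  rewrite E.
  assert (Hr : 0 <= r <= 1).
  { unfold r. split; [apply Rmult_le_pos; [lra | left; apply Rinv_0_lt_compat; lra]|].
    apply Rmult_le_reg_r with (INR n + 2); [lra|].
    unfold Rdiv; rewrite Rmult_assoc, Rinv_l by lra. lra. }
  assert (r ^ 2 * (a - t * b)^2 <= (a - t * b)^2).
  { rewrite <- (Rmult_1_l ((a - t * b)^2)) at 2.
    apply Rmult_le_compat_r; [apply pow2_ge_0 | nra]. }
  lra.
Qed.

(* |L_n(t)| <= 1 for -1 < t <= 1. *)
Lemma legendre_sq_le_1 n t : -1 < t <= 1 -> (legendre n t)^2 <= 1.
Proof.
  intros Ht. destruct (Req_dec t 1) as [->|Hne].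
  - destruct (legendre_at_1 n) as [-> _]. lra.
  - destruct n; [rewrite legendre_0; lra|].
    pose proof (legendre_energy n t ltac:(lra)).
    assert (0 < 1 - t^2) by nra.
    assert (0 <= (legendre n t - t * legendre (S n) t)^2) by apply pow2_ge_0.
    assert ((1 - t^2) * (legendre (S n) t)^2 <= (1 - t^2) * 1) by lra.
    apply Rmult_le_reg_l in H2; lra.
Qed.

Definition legendre_lead (n : nat) : R := INR (fact (2 * n)) / (2 ^ n * INR (fact n) ^ 2).

Lemma legendre_lead_S m : legendre_lead (S m) = (2 * INR m + 1) / (INR m + 1) * legendre_lead m.
Proof.
  unfold legendre_lead. replace (2 * S m)%nat with (S (S (2 * m))) by lia.
  rewrite !fact_simpl, !mult_INR, !S_INR, mult_INR. simpl (INR 2).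
  pose proof (INR_fact_neq_0 m). pose proof (INR_fact_neq_0 (2 * m)). pose proof (pos_INR m).
  simpl pow. field. repeat split; try lra. apply pow_nonzero; lra.
Qed.

Definition poly_rep (n : nat) (g : R -> R) (c : nat -> R) : Prop :=
  (forall k, (n < k)%nat -> c k = 0) /\ forall t, g t = sum_f_R0 (fun k => c k * t ^ k) n.

Lemma sum_extend (f : nat -> R) n m : (n <= m)%nat -> (forall k, (n < k)%nat -> f k = 0) ->
  sum_f_R0 f m = sum_f_R0 f n.
Proof. intros Hnm Hf. induction Hnm; auto. rewrite tech5, IHHnm, Hf by lia. lra. Qed.

(* Coefficients of t * p(t). *)
Definition shiftc (c : nat -> R) (k : nat) : R := match k with O => 0 | S k' => c k' end.

Lemma sum_shift (c : nat -> R) n t :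
  sum_f_R0 (fun k => shiftc c k * t ^ k) (S n) = t * sum_f_R0 (fun k => c k * t ^ k) n.
Proof.
  rewrite decomp_sum by lia. simpl pred. simpl shiftc. rewrite scal_sum, Rmult_0_l, Rplus_0_l.
  apply sum_eq; intros; simpl; ring.
Qed.

Lemma legendre_poly n : exists c c',
  poly_rep n (legendre n) c /\ c n = legendre_lead n /\
  poly_rep (S n) (legendre (S n)) c' /\ c' (S n) = legendre_lead (S n).
Proof.
  induction n.
  - exists (fun k => match k with O => 1 | _ => 0 end),
           (fun k => match k with 1%nat => 1 | _ => 0 end).
    unfold poly_rep, legendre_lead; simpl.
    split; [split|split; [|split; [split|]]].
    + intros [|k] Hk; [lia|reflexivity].
    + intros t; rewrite legendre_0; ring.
    + lra.
    + intros [|[|k]] Hk; try lia; reflexivity.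
    + intros t; rewrite legendre_1; ring.
    + lra.
  - destruct IHn as [c [c' [[Hc1 Hc2] [Hcn [[Hc1' Hc2'] Hcn']]]]].
    exists c', (fun k => ((2 * INR n + 3) * shiftc c' k - (INR n + 1) * c k) / (INR n + 2)).
    pose proof (pos_INR n).
    split; [split; auto | split; [auto | split; [split|]]].
    + intros [|k] Hk; [lia|]. simpl shiftc. rewrite Hc1', Hc1 by lia. lra.
    + intros t. rewrite legendre_rec, Hc2, Hc2'.
      rewrite <- (sum_extend (fun k => c k * t^k) n (S (S n)))
        by (lia || (intros; rewrite Hc1 by lia; ring)).
      symmetry.
      rewrite (sum_eq _ (fun k => (shiftc c' k * t^k) * ((2 * INR n + 3) / (INR n + 2))
                              - (c k * t^k) * ((INR n + 1) / (INR n + 2))))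
        by (intros; unfold Rdiv; ring).
      rewrite minus_sum, <- !scal_sum, sum_shift. field. lra.
    + simpl shiftc. rewrite Hc1, Hcn', (legendre_lead_S (S n)), S_INR by lia. field. lra.
Qed.

Definition cell_factor (N k q : nat) (t : R) : R :=
  sqrt (2 * INR q + 1) * legendre q (2 * (INR N * t - INR k) - 1) *
  ind_oc (INR k / INR N) (INR (S k) / INR N) t.

Lemma eta_factorises D N a x : eta D N a x =
  sqrt (INR N ^ D) * prodD D (fun d => cell_factor N (nth d (fst a) 0%nat) (nth d (snd a) 0%nat) (x d)).
Proof. destruct a; reflexivity. Qed.

Lemma ind_oc_sq a b t : ind_oc a b t * ind_oc a b t = ind_oc a b t.
Proof. unfold ind_oc. destruct (Rlt_dec a t); [destruct (Rle_dec t b)|]; ring. Qed.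

Lemma ind_oc_bounds a b t : 0 <= ind_oc a b t <= 1.
Proof. unfold ind_oc. destruct (Rlt_dec a t); [destruct (Rle_dec t b)|]; lra. Qed.

Lemma cell_endpoint_le N p q : (0 < N)%nat -> (p <= q)%nat -> INR p / INR N <= INR q / INR N.
Proof.
  intros HN Hpq. apply Rmult_le_compat_r; [|apply le_INR; lia].
  left; apply Rinv_0_lt_compat, lt_0_INR; lia.
Qed.

Lemma ind_oc_disjoint N k k' t : (0 < N)%nat -> k <> k' ->
  ind_oc (INR k / INR N) (INR (S k) / INR N) t * ind_oc (INR k' / INR N) (INR (S k') / INR N) t = 0.
Proof.
  intros HN Hne. unfold ind_oc.
  destruct (Rlt_dec (INR k / INR N) t); [destruct (Rle_dec t (INR (S k) / INR N))|]; try ring;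
  destruct (Rlt_dec (INR k' / INR N) t); [destruct (Rle_dec t (INR (S k') / INR N))|]; try ring.
  destruct (Nat.lt_total k k') as [H|[H|H]]; [|lia|].
  - pose proof (cell_endpoint_le N (S k) k' HN H). lra.
  - pose proof (cell_endpoint_le N (S k') k HN H). lra.
Qed.

Lemma ind_oc_sum N n t : (0 < N)%nat ->
  sumL (seq 0 n) (fun k => ind_oc (INR k / INR N) (INR (S k) / INR N) t) <= 1 /\
  (INR n / INR N < t ->
   sumL (seq 0 n) (fun k => ind_oc (INR k / INR N) (INR (S k) / INR N) t) = 0).
Proof.
  intros HN. induction n; [unfold sumL; simpl; split; [lra|auto]|].
  destruct IHn as [I1 I2]. pose proof (cell_endpoint_le N n (S n) HN ltac:(lia)).
  rewrite seq_S, sumL_app, sumL_cons. simpl (0 + n)%nat.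
  replace (sumL nil _) with 0 by reflexivity.
  unfold ind_oc at 2 4.
  destruct (Rlt_dec (INR n / INR N) t); [destruct (Rle_dec t (INR (S n) / INR N))|].
  - rewrite I2 by auto. split; [lra | intros; lra].
  - split; [lra|]. intros. rewrite I2 by lra. lra.
  - split; [lra | intros; lra].
Qed.

(* e_{k,q}(t)^2 <= (2q+1) 1_{cell k}(t), by |L_q| <= 1 on (-1,1]. *)
Lemma cell_factor_sq_le N k q t : (0 < N)%nat ->
  (cell_factor N k q t) ^ 2 <= (2 * INR q + 1) * ind_oc (INR k / INR N) (INR (S k) / INR N) t.
Proof.
  intros HN. assert (HNp : 0 < INR N) by (apply lt_0_INR; lia).
  pose proof (pos_INR q). unfold cell_factor, ind_oc.
  destruct (Rlt_dec (INR k / INR N) t) as [Hlo|]; [destruct (Rle_dec t (INR (S k) / INR N)) as [Hhi|]|];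
    [|rewrite Rmult_0_r; simpl; lra ..].
  assert (INR k < INR N * t).
  { apply Rmult_lt_compat_l with (r := INR N) in Hlo; auto. unfold Rdiv in Hlo.
    rewrite Rmult_comm, Rmult_assoc, Rinv_l, Rmult_1_r in Hlo; lra. }
  assert (INR N * t <= INR k + 1).
  { rewrite S_INR in Hhi. apply Rmult_le_compat_l with (r := INR N) in Hhi; [|lra]. unfold Rdiv in Hhi.
    rewrite (Rmult_comm (INR k + 1)), <- Rmult_assoc, Rinv_r, Rmult_1_l in Hhi; lra. }
  assert (Hb : (legendre q (2 * (INR N * t - INR k) - 1)) ^ 2 <= 1) by (apply legendre_sq_le_1; lra).
  replace ((sqrt (2 * INR q + 1) * legendre q (2 * (INR N * t - INR k) - 1) * 1) ^ 2) with
    ((sqrt (2 * INR q + 1) * sqrt (2 * INR q + 1)) * (legendre q (2 * (INR N * t - INR k) - 1)) ^ 2)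
    by ring.
  rewrite sqrt_sqrt by lra. nra.
Qed.

(* Right-endpoint Riemann sum of h on [0,1] with M+1 equal cells. *)
Definition riemann_sum_1d (h : R -> R) (M : nat) : R :=
  / INR (S M) * sumL (seq 0 (S M)) (fun k => h (INR (S k) / INR (S M))).

Lemma mesh_eventually_small (delta : R) : 0 < delta ->
  exists M0, forall M, (M >= M0)%nat -> / delta < INR M + 1.
Proof.
  intros Hd. destruct (archimed (/ delta)) as [Ha _].
  exists (Z.to_nat (up (/ delta))). intros M HM.
  apply Rlt_le_trans with (IZR (up (/ delta))); auto.
  destruct (Z_le_gt_dec 0 (up (/ delta))) as [Hz|Hz].
  - rewrite <- (Z2Nat.id _ Hz), <- INR_IZR_INZ. apply le_INR in HM. lra.
  - apply Z.gt_lt, IZR_lt in Hz. pose proof (pos_INR M). lra.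
Qed.

(** Coquelicot is imported only inside this module: its notations (e.g. the
   complex numbers [C]) would otherwise shadow the binomial coefficient. *)

Module OneDimIntegrals.
Import Coquelicot.Coquelicot.

Ltac as_real_eq := match goal with |- ?a = ?b => change (@eq R a b) end.

(* Coquelicot's integration lemmas, specialised to real-valued integrands so
   that unification does not have to guess the normed module. *)
Lemma isR_scal (f : R -> R) a b k l : is_RInt f a b l -> is_RInt (fun y => k * f y) a b (k * l).
Proof. intros H. apply (@is_RInt_scal R_NormedModule f a b k l H). Qed.
Lemma isR_plus (f g : R -> R) a b l1 l2 : is_RInt f a b l1 -> is_RInt g a b l2 ->
  is_RInt (fun y => f y + g y) a b (l1 + l2).
Proof. intros H1 H2. apply (@is_RInt_plus R_NormedModule f g a b l1 l2 H1 H2). Qed.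
Lemma isR_minus (f g : R -> R) a b l1 l2 : is_RInt f a b l1 -> is_RInt g a b l2 ->
  is_RInt (fun y => f y - g y) a b (l1 - l2).
Proof. intros H1 H2. apply (@is_RInt_minus R_NormedModule f g a b l1 l2 H1 H2). Qed.
Lemma isR_ext (f g : R -> R) a b l : (forall x, Rmin a b < x < Rmax a b -> f x = g x) ->
  is_RInt f a b l -> is_RInt g a b l.
Proof. intros H1 H2. apply (@is_RInt_ext R_NormedModule f g a b l H1 H2). Qed.
Lemma isR_unique (f : R -> R) a b l : is_RInt f a b l -> RInt f a b = l.
Proof. intros H. apply (@is_RInt_unique R_CompleteNormedModule f a b l H). Qed.
Lemma isR_value (f : R -> R) a b l l' : l = l' -> is_RInt f a b l -> is_RInt f a b l'.
Proof. intros ->; auto. Qed.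
Lemma isR_chasles (f : R -> R) a b c l1 l2 :
  is_RInt f a b l1 -> is_RInt f b c l2 -> is_RInt f a c (l1 + l2).
Proof. intros H1 H2. apply (@is_RInt_Chasles R_NormedModule f a b c l1 l2 H1 H2). Qed.
Lemma isR_zero (f : R -> R) a b :
  (forall x, Rmin a b < x < Rmax a b -> f x = 0) -> is_RInt f a b 0.
Proof.
  intros H. apply (isR_ext (fun _ => 0)); [intros; symmetry; auto|].
  apply (isR_value _ _ _ (scal (b - a) 0)); [unfold scal; simpl; unfold mult; simpl; as_real_eq; ring|].
  apply (@is_RInt_const R_NormedModule).
Qed.

Lemma cont_mult (f g : R -> R) x :
  continuous f x -> continuous g x -> continuous (fun t => f t * g t) x.
Proof. intros. apply (continuous_mult f g x); auto. Qed.
Lemma cont_plus (f g : R -> R) x :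
  continuous f x -> continuous g x -> continuous (fun t => f t + g t) x.
Proof. intros. apply (continuous_plus f g x); auto. Qed.
Lemma cont_const (c x : R) : continuous (fun _ : R => c) x.
Proof. apply continuous_const. Qed.
Lemma cont_id (x : R) : continuous (fun t : R => t) x.
Proof. apply continuous_id. Qed.

Lemma cont_pow m x : continuous (fun t : R => t ^ m) x.
Proof. induction m; [apply cont_const|]. simpl. apply cont_mult; auto. apply cont_id. Qed.

Lemma cont_legendre n x : continuous (legendre n) x /\ continuous (legendre (S n)) x.
Proof.
  induction n as [|n [H1 H2]].
  - split; [apply (continuous_ext (fun _ => 1)) | apply (continuous_ext (fun t => t))];
      try (intros; reflexivity); [apply cont_const | apply cont_id].
  - split; auto.
    apply (continuous_ext (fun t => ((2 * INR n + 3) * t * legendre (S n) t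
                                     + (- (INR n + 1)) * legendre n t) * / (INR n + 2))).
    { intros t. change (@eq R (((2 * INR n + 3) * t * legendre (S n) t
          + (- (INR n + 1)) * legendre n t) * / (INR n + 2)) (legendre (S (S n)) t)).
      rewrite legendre_rec. unfold Rdiv. ring. }
    apply cont_mult; [|apply cont_const]. apply cont_plus; apply cont_mult; auto; [|apply cont_const].
    apply cont_mult; [apply cont_const | apply cont_id].
Qed.

(** ** Legendre moments and orthogonality *)

Definition moment (n m : nat) : R := RInt (fun t => t ^ m * legendre n t) (-1) 1.

Lemma is_moment n m : is_RInt (fun t => t ^ m * legendre n t) (-1) 1 (moment n m).
Proof.
  apply (@RInt_correct R_CompleteNormedModule), (@ex_RInt_continuous R_CompleteNormedModule).
  intros; apply cont_mult; [apply cont_pow | apply cont_legendre].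
Qed.

Lemma moment_rec n m : moment (S (S n)) m =
  ((2 * INR n + 3) * moment (S n) (S m) - (INR n + 1) * moment n m) / (INR n + 2).
Proof.
  apply isR_unique.
  apply (isR_ext (fun t => / (INR n + 2) * ((2 * INR n + 3) * (t ^ (S m) * legendre (S n) t)
                                           - (INR n + 1) * (t ^ m * legendre n t)))).
  { intros x _. rewrite legendre_rec. simpl. field. pose proof (pos_INR n); lra. }
  apply (isR_value _ _ _ (/ (INR n + 2) * ((2 * INR n + 3) * moment (S n) (S m)
                                          - (INR n + 1) * moment n m))).
  { unfold Rdiv; apply Rmult_comm. }
  apply isR_scal, isR_minus; apply isR_scal, is_moment.
Qed.

Lemma moment_0 m : moment 0 m = (1 - (-1) ^ (S m)) / INR (S m).
Proof.
  apply isR_unique.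
  apply (isR_ext (fun t => t ^ m)); [intros; rewrite legendre_0; ring|].
  apply (isR_value _ _ _ (1 ^ (S m) / INR (S m) - (-1) ^ (S m) / INR (S m))).
  { rewrite pow1. unfold Rdiv. rewrite Rmult_minus_distr_r. reflexivity. }
  apply (@is_RInt_derive R_CompleteNormedModule (fun t => t ^ (S m) / INR (S m))).
  - intros x _. auto_derive; auto. as_real_eq.
    destruct m; [field|]. field. pose proof (pos_INR (S m)); lra.
  - intros; apply cont_pow.
Qed.

Lemma moment_1 m : moment 1 m = moment 0 (S m).
Proof.
  unfold moment. apply (@RInt_ext R_CompleteNormedModule).
  intros; rewrite legendre_1, legendre_0. as_real_eq. simpl; ring.
Qed.

Definition moment_value (n k : nat) : R :=
  2 ^ (n + 1) * INR (fact (n + 2 * k)) * INR (fact (n + k)) /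
  (INR (fact k) * INR (fact (2 * n + 2 * k + 1))).

Definition moment_spec (n : nat) : Prop :=
  (forall k, moment n (n + 2 * k) = moment_value n k) /\
  (forall k, moment n (n + 2 * k + 1) = 0) /\
  (forall m, (m < n)%nat -> moment n m = 0).

(* Record nonvanishing of the factorials, resp. nonnegativity of the casts,
   occurring in the goal, as side conditions for [field]. *)
Ltac fact_facts := repeat match goal with |- context [INR (fact ?a)] =>
  lazymatch goal with
  | H : INR (fact a) <> 0 |- _ => fail
  | _ => let H := fresh in assert (H := INR_fact_neq_0 a)
  end end.

Ltac nat_facts := repeat match goal with |- context [INR ?a] =>
  lazymatch goal with
  | H : 0 <= INR a |- _ => fail
  | _ => let H := fresh in assert (H := pos_INR a)
  end end.

Lemma fact_S_INR a : INR (fact (S a)) = INR (S a) * INR (fact a).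
Proof. rewrite fact_simpl, mult_INR. reflexivity. Qed.

Lemma fact_eq a b : a = b -> INR (fact a) = INR (fact b).
Proof. intros ->; reflexivity. Qed.

Lemma moment_spec_0 : moment_spec 0.
Proof.
  split; [|split].
  - intros k. rewrite Nat.add_0_l, moment_0, pow_1_odd. unfold moment_value. rewrite !Nat.add_0_l.
    replace (2 * 0 + 2 * k + 1)%nat with (S (2 * k)) by lia.
    replace (2 * k + 1)%nat with (S (2 * k)) by lia.
    rewrite fact_simpl, mult_INR. fact_facts. pose proof (pos_INR (2 * k)).
    rewrite S_INR, pow_1. field. split; auto. lra.
  - intros k. rewrite Nat.add_0_l, moment_0. replace (S (2 * k + 1)) with (2 * (S k))%nat by lia.
    rewrite pow_1_even. unfold Rdiv. rewrite Rminus_diag. apply Rmult_0_l.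
  - intros; lia.
Qed.

Lemma moment_spec_1 : moment_spec 1.
Proof.
  destruct moment_spec_0 as [A [B _]]. split; [|split].
  - intros k. rewrite moment_1. replace (S (1 + 2 * k)) with (0 + 2 * S k)%nat by lia.
    rewrite A. unfold moment_value.
    rewrite (fact_eq (0 + 2 * S k) (S (S (2 * k)))), (fact_eq (0 + S k) (S k)),
      (fact_eq (2 * 0 + 2 * S k + 1) (S (S (S (2 * k))))), (fact_eq (1 + 2 * k) (S (2 * k))),
      (fact_eq (1 + k) (S k)), (fact_eq (2 * 1 + 2 * k + 1) (S (S (S (2 * k))))) by lia.
    rewrite !fact_S_INR. replace (0 + 1)%nat with 1%nat by lia. replace (1 + 1)%nat with 2%nat by lia.
    fact_facts. rewrite ?S_INR. nat_facts. rewrite mult_INR. simpl (INR 2).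
    field. repeat split; try lra; auto.
  - intros k. rewrite moment_1. replace (S (1 + 2 * k + 1)) with (0 + 2 * S k + 1)%nat by lia. auto.
  - intros m Hm. replace m with 0%nat by lia. rewrite moment_1. apply (B 0%nat).
Qed.

(* The closed form satisfies the moment recurrence; the companion identity
   below expresses that M(n+2, n) vanishes. *)
Lemma moment_value_rec n k :
  (2 * INR n + 3) * moment_value (S n) (S k) - (INR n + 1) * moment_value n (S k) =
  (INR n + 2) * moment_value (S (S n)) k.
Proof.
  unfold moment_value.
  rewrite (fact_eq (S n + 2 * S k) (S (n + 2 * k + 2))), (fact_eq (S n + S k) (S (n + k + 1))),
    (fact_eq (2 * S n + 2 * S k + 1) (S (S (2 * n + 2 * k + 3)))),
    (fact_eq (n + 2 * S k) (n + 2 * k + 2)), (fact_eq (n + S k) (n + k + 1)),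
    (fact_eq (2 * n + 2 * S k + 1) (2 * n + 2 * k + 3)),
    (fact_eq (S (S n) + 2 * k) (n + 2 * k + 2)), (fact_eq (S (S n) + k) (S (n + k + 1))),
    (fact_eq (2 * S (S n) + 2 * k + 1) (S (S (2 * n + 2 * k + 3)))) by lia.
  rewrite !fact_S_INR, !pow_add. simpl pow. fact_facts. rewrite !S_INR, !plus_INR, !mult_INR.
  pose proof (pos_INR n). pose proof (pos_INR k). simpl (INR 2). simpl (INR 3).
  rewrite ?INR_1. field. repeat split; auto; lra.
Qed.

Lemma moment_value_rec0 n :
  (2 * INR n + 3) * moment_value (S n) 0 = (INR n + 1) * moment_value n 0.
Proof.
  unfold moment_value.
  rewrite (fact_eq (S n + 2 * 0) (S n)), (fact_eq (S n + 0) (S n)),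
    (fact_eq (2 * S n + 2 * 0 + 1) (S (S (2 * n + 1)))),
    (fact_eq (n + 2 * 0) n), (fact_eq (n + 0) n), (fact_eq (2 * n + 2 * 0 + 1) (2 * n + 1)) by lia.
  rewrite !fact_S_INR, !pow_add. simpl pow. fact_facts. rewrite !S_INR, !plus_INR, !mult_INR.
  pose proof (pos_INR n). simpl (INR 2). simpl (INR 1).
  field. repeat split; auto; lra.
Qed.

Lemma moment_spec_step n : moment_spec n -> moment_spec (S n) -> moment_spec (S (S n)).
Proof.
  intros [A0 [B0 C0]] [A1 [B1 C1]]. pose proof (pos_INR n). split; [|split].
  - intros k. rewrite moment_rec.
    replace (S (S (S n) + 2 * k)) with (S n + 2 * S k)%nat by lia. rewrite A1.
    replace (S (S n) + 2 * k)%nat with (n + 2 * S k)%nat by lia. rewrite A0.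
    rewrite moment_value_rec. field. lra.
  - intros k. rewrite moment_rec.
    replace (S (S (S n) + 2 * k + 1)) with (S n + 2 * S k + 1)%nat by lia. rewrite B1.
    replace (S (S n) + 2 * k + 1)%nat with (n + 2 * S k + 1)%nat by lia. rewrite B0.
    unfold Rdiv. ring.
  - intros m Hm. rewrite moment_rec.
    destruct (Nat.eq_dec m (S n)) as [->|H1]; [|destruct (Nat.eq_dec m n) as [->|H2]].
    + replace (moment (S n) (S (S n))) with (moment (S n) (S n + 2 * 0 + 1)) by (f_equal; lia).
      replace (moment n (S n)) with (moment n (n + 2 * 0 + 1)) by (f_equal; lia).
      rewrite B1, B0. unfold Rdiv; ring.
    + replace (moment (S n) (S n)) with (moment (S n) (S n + 2 * 0)) by (f_equal; lia).
      replace (moment n n) with (moment n (n + 2 * 0)) by (f_equal; lia).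
      rewrite A1, A0.
      rewrite moment_value_rec0. field. lra.
    + rewrite C1, C0 by lia. unfold Rdiv; ring.
Qed.

Lemma moment_spec_all n : moment_spec n.
Proof.
  assert (H : moment_spec n /\ moment_spec (S n)).
  { induction n as [|n [H0 H1]]; [split; [apply moment_spec_0 | apply moment_spec_1]|].
    split; auto. apply moment_spec_step; auto. }
  apply H.
Qed.

Lemma legendre_times_poly n d c :
  is_RInt (fun t => legendre n t * sum_f_R0 (fun k => c k * t^k) d) (-1) 1
          (sum_f_R0 (fun k => c k * moment n k) d).
Proof.
  induction d.
  - simpl. apply (isR_ext (fun t => c 0%nat * (t ^ 0 * legendre n t))); [intros; simpl; ring|].
    apply isR_scal, is_moment.
  - apply (isR_ext (fun t => legendre n t * sum_f_R0 (fun k => c k * t^k) d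
                             + c (S d) * (t ^ (S d) * legendre n t))).
    { intros; rewrite tech5; ring. }
    rewrite tech5. apply isR_plus; auto. apply isR_scal, is_moment.
Qed.

Lemma legendre_lead_moment n : legendre_lead n * moment_value n 0 = 2 / (2 * INR n + 1).
Proof.
  unfold legendre_lead, moment_value.
  rewrite (fact_eq (n + 2 * 0) n), (fact_eq (n + 0) n),
    (fact_eq (2 * n + 2 * 0 + 1) (S (2 * n))) by lia.
  rewrite fact_S_INR, pow_add. fact_facts. rewrite S_INR, mult_INR.
  simpl (fact 0). simpl (INR 1). simpl (INR 2).
  pose proof (pos_INR n). field. repeat split; auto; try lra. apply pow_nonzero; lra.
Qed.

Lemma legendre_orth_lt n m : (m < n)%nat -> is_RInt (fun t => legendre n t * legendre m t) (-1) 1 0.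
Proof.
  intros Hmn. destruct (legendre_poly m) as [c [_ [[Hc1 Hc2] _]]].
  apply (isR_ext (fun t => legendre n t * sum_f_R0 (fun k => c k * t^k) m));
    [intros; rewrite Hc2; reflexivity|].
  apply (isR_value _ _ _ (sum_f_R0 (fun k => c k * moment n k) m)); [|apply legendre_times_poly].
  destruct (moment_spec_all n) as [_ [_ HC]].
  rewrite (sum_eq _ (fun _ => 0)), sum_cte; [as_real_eq; ring|].
  intros i Hi. rewrite HC by lia. ring.
Qed.

(* Only the top coefficient of L_n meets a nonzero moment M(n, n). *)
Lemma legendre_norm n : is_RInt (fun t => legendre n t * legendre n t) (-1) 1 (2 / (2 * INR n + 1)).
Proof.
  destruct (legendre_poly n) as [c [_ [[Hc1 Hc2] [Hcn _]]]].
  apply (isR_ext (fun t => legendre n t * sum_f_R0 (fun k => c k * t^k) n));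
    [intros; rewrite Hc2; reflexivity|].
  apply (isR_value _ _ _ (sum_f_R0 (fun k => c k * moment n k) n)); [|apply legendre_times_poly].
  destruct (moment_spec_all n) as [HA [_ HC]].
  rewrite <- legendre_lead_moment, <- Hcn.
  replace (moment_value n 0) with (moment n n) by (rewrite <- HA; f_equal; lia).
  destruct n; [reflexivity|].
  rewrite tech5, (sum_eq _ (fun _ => 0)), sum_cte; [as_real_eq; ring|].
  intros i Hi. rewrite HC by lia. ring.
Qed.

Lemma legendre_orth n m : is_RInt (fun t => legendre n t * legendre m t) (-1) 1
  (if Nat.eq_dec n m then 2 / (2 * INR n + 1) else 0).
Proof.
  destruct (Nat.eq_dec n m) as [<-|Hne]; [apply legendre_norm|].
  destruct (Nat.lt_total n m) as [H|[H|H]]; [|lia|apply legendre_orth_lt; auto].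
  apply (isR_ext (fun t => legendre m t * legendre n t)); [intros; ring|].
  apply legendre_orth_lt; auto.
Qed.

Lemma iota_shift s n : seq.iota (S s) n = map S (seq.iota s n).
Proof. revert s; induction n; intros s; simpl; [reflexivity|]. rewrite IHn. reflexivity. Qed.

Lemma mkseq_S (g : nat -> R) m : seq.mkseq g (S m) = g 0%nat :: seq.mkseq (fun i => g (S i)) m.
Proof.
  unfold seq.mkseq. simpl. rewrite iota_shift. f_equal.
  change (seq.map g (map S (seq.iota 0 m)) = seq.map (fun i => g (S i)) (seq.iota 0 m)).
  rewrite <- (map_map S g). reflexivity.
Qed.

Lemma riemann_sum_mkseq (h : R -> R) (g : nat -> R) n :
  Riemann_sum h (SF_seq_f2 (fun _ y => y) (seq.mkseq g (S (S n)))) =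
  sumL (seq 0 (S n)) (fun i => (g (S i) - g i) * h (g (S i))).
Proof.
  revert g; induction n; intros g;
    rewrite mkseq_S, SF_cons_f2, Riemann_sum_cons by (simpl; lia).
  - rewrite mkseq_S. simpl. unfold sumL; simpl.
    unfold plus, scal; simpl. unfold mult; simpl. unfold Riemann_sum; simpl.
    change (@zero R_AbelianGroup) with 0. reflexivity.
  - rewrite IHn.
    replace (seq 0 (S (S n))) with (0%nat :: seq 1 (S n)) by reflexivity.
    rewrite sumL_cons, <- seq_shift, sumL_map, (mkseq_S (fun i => g (S i))).
    simpl. unfold plus, scal; simpl. unfold mult; simpl. reflexivity.
Qed.

Lemma riemann_sum_unif_part (h : R -> R) M :
  Riemann_sum h (SF_seq_f2 (fun _ y => y) (unif_part 0 1 M)) = riemann_sum_1d h M.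
Proof.
  unfold unif_part, riemann_sum_1d. rewrite riemann_sum_mkseq, <- sumL_scal.
  apply sumL_ext; intros k _. rewrite !S_INR. pose proof (pos_INR M). pose proof (pos_INR k).
  replace (0 + (INR k + 1) * (1 - 0) / (INR M + 1)) with ((INR k + 1) / (INR M + 1)) by (field; lra).
  field. lra.
Qed.

Lemma riemann_sum_1d_cv (h : R -> R) l : is_RInt h 0 1 l -> Un_cv (riemann_sum_1d h) l.
Proof.
  intros H eps Heps.
  destruct (H _ (locally_ball l (mkposreal eps Heps))) as [delta Hd].
  destruct (mesh_eventually_small delta (cond_pos delta)) as [M0 HM0].
  exists M0. intros M HM. specialize (HM0 M HM).
  pose proof (Riemann_fine_unif_part (fun _ y => y) 0 1 M ltac:(intros; lra) ltac:(lra))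
    as [S1 [S2 [S3 S4]]].
  assert (Hdpos := cond_pos delta).
  specialize (Hd (SF_seq_f2 (fun _ y => y) (unif_part 0 1 M))).
  assert (Hstep : seq_step (SF_lx (SF_seq_f2 (fun _ y => y) (unif_part 0 1 M))) < delta).
  { eapply Rle_lt_trans; [apply S1|]. replace (1 - 0) with 1 by ring. pose proof (pos_INR M).
    apply Rmult_lt_reg_r with (INR M + 1); [lra|].
    unfold Rdiv. rewrite Rmult_1_l, Rinv_l by lra.
    apply Rmult_lt_reg_l with (/ delta); [apply Rinv_0_lt_compat; lra|].
    rewrite <- Rmult_assoc, Rinv_l by lra. lra. }
  rewrite Rmin_left, Rmax_right in Hd by lra.
  specialize (Hd Hstep (conj S2 (conj S3 S4))). simpl in Hd.
  rewrite riemann_sum_unif_part in Hd. unfold ball in Hd; simpl in Hd. unfold AbsRing_ball in Hd.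
  replace (sign (1 - 0)) with 1 in Hd by (symmetry; apply sign_eq_1; lra).
  unfold abs, minus, plus, opp, scal in Hd; simpl in Hd. unfold mult in Hd; simpl in Hd.
  rewrite Rmult_1_l in Hd. exact Hd.
Qed.

(* Change of variables t = 2(Nx - i) - 1 maps the cell (i/N, (i+1)/N] onto (-1, 1]:
   int_0^1 N phi(2(Nx-i)-1) 1_{cell i}(x) dx = (1/2) int_{-1}^1 phi. *)
Lemma cell_integral (phi : R -> R) I N i : (0 < N)%nat -> (i < N)%nat -> is_RInt phi (-1) 1 I ->
  is_RInt (fun x => INR N * phi (2 * (INR N * x - INR i) - 1) *
     ind_oc (INR i / INR N) (INR (S i) / INR N) x) 0 1 (I / 2).
Proof.
  intros HN Hi HI.
  assert (HNp : 0 < INR N) by (apply lt_0_INR; lia).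
  assert (Hi' : INR (S i) <= INR N) by (apply le_INR; lia).
  pose proof (pos_INR i). rewrite S_INR in Hi'.
  set (a := INR i / INR N). set (b := INR (S i) / INR N).
  assert (Ha : 0 <= a) by (unfold a; apply Rmult_le_pos; [lra | left; apply Rinv_0_lt_compat; lra]).
  assert (Hab : a < b)
    by (unfold a, b; rewrite S_INR; apply Rmult_lt_compat_r; [apply Rinv_0_lt_compat|]; lra).
  assert (Hb : b <= 1) by (unfold b; rewrite S_INR; apply Rmult_le_reg_r with (INR N); auto;
     unfold Rdiv; rewrite Rmult_assoc, Rinv_l; lra).
  replace (I / 2) with (0 + (I / 2 + 0)) by ring.
  apply isR_chasles with a; [|apply isR_chasles with b].
  - apply isR_zero. intros x Hx. rewrite Rmin_left, Rmax_right in Hx by lra.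
    unfold ind_oc. destruct (Rlt_dec a x); [lra|ring].
  - apply (isR_ext (fun x => / 2 * scal (2 * INR N) (phi ((2 * INR N) * x + (- (2 * INR i + 1)))))).
    { intros x Hx. rewrite Rmin_left, Rmax_right in Hx by lra.
      unfold ind_oc. destruct (Rlt_dec a x); [|lra]. destruct (Rle_dec x b); [|lra].
      unfold scal; simpl; unfold mult; simpl.
      replace (2 * INR N * x + - (2 * INR i + 1)) with (2 * (INR N * x - INR i) - 1) by ring.
      field. }
    replace (I / 2) with (/ 2 * I) by (unfold Rdiv; ring).
    apply isR_scal, (@is_RInt_comp_lin R_NormedModule).
    replace (2 * INR N * a + - (2 * INR i + 1)) with (-1) by (unfold a; field; lra).
    replace (2 * INR N * b + - (2 * INR i + 1)) with 1 by (unfold b; rewrite S_INR; field; lra).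
    exact HI.
  - apply isR_zero. intros x Hx. rewrite Rmin_left, Rmax_right in Hx by lra.
    unfold ind_oc. destruct (Rlt_dec a x); [|ring]. destruct (Rle_dec x b); [lra|ring].
Qed.

Lemma cell_factor_gram_1d N i i' j j' : (0 < N)%nat -> (i < N)%nat ->
  Un_cv (riemann_sum_1d (fun t => INR N * (cell_factor N i j t * cell_factor N i' j' t)))
        (if (Nat.eqb i i' && Nat.eqb j j')%bool then 1 else 0).
Proof.
  intros HN Hi. destruct (Nat.eq_dec i i') as [<-|Hne].
  - rewrite Nat.eqb_refl. simpl andb.
    set (cj := sqrt (2 * INR j + 1) * sqrt (2 * INR j' + 1)).
    set (I := cj * (if Nat.eq_dec j j' then 2 / (2 * INR j + 1) else 0)).
    assert (HI : is_RInt (fun t => cj * (legendre j t * legendre j' t)) (-1) 1 I)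
      by (apply isR_scal, legendre_orth).
    replace (if Nat.eqb j j' then 1 else 0) with (I / 2).
    2:{ unfold I, cj. destruct (Nat.eq_dec j j') as [<-|Hj].
        - rewrite Nat.eqb_refl. pose proof (pos_INR j). rewrite sqrt_sqrt by lra. field. lra.
        - apply Nat.eqb_neq in Hj. rewrite Hj. field. }
    eapply Un_cv_ext; [|exact (riemann_sum_1d_cv _ _ (cell_integral _ _ N i HN Hi HI))].
    intros M. unfold riemann_sum_1d. f_equal. apply sumL_ext; intros k _.
    unfold cell_factor, cj.
    set (u := ind_oc (INR i / INR N) (INR (S i) / INR N) (INR (S k) / INR (S M))).
    assert (Hu : u * u = u) by apply ind_oc_sq. rewrite <- Hu at 1. ring.
  - replace (if (Nat.eqb i i' && Nat.eqb j j')%bool then 1 else 0) with 0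
      by (apply Nat.eqb_neq in Hne; rewrite Hne; reflexivity).
    eapply Un_cv_ext; [|apply (cv_const 0)]. intros M. unfold riemann_sum_1d.
    rewrite (sumL_ext _ _ (fun _ => 0)), sumL_zero; [ring|].
    intros k _. unfold cell_factor.
    transitivity (INR N * sqrt (2 * INR j + 1) * sqrt (2 * INR j' + 1) *
       legendre j (2 * (INR N * (INR (S k) / INR (S M)) - INR i) - 1) *
       legendre j' (2 * (INR N * (INR (S k) / INR (S M)) - INR i') - 1) *
       (ind_oc (INR i / INR N) (INR (S i) / INR N) (INR (S k) / INR (S M)) *
        ind_oc (INR i' / INR N) (INR (S i') / INR N) (INR (S k) / INR (S M)))); [ring|].
    rewrite ind_oc_disjoint by auto. ring.
Qed.

End OneDimIntegrals.
Import OneDimIntegrals.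

Definition tag (D M : nat) (k : list nat) : nat -> R :=
  fun d => if Nat.ltb d D then INR (S (nth d k 0%nat)) / INR M else 0.

Lemma riemann_sum_tags D M F :
  riemann_sum D M F = (/ INR M) ^ D * sumL (tuples D M) (fun k => F (tag D M k)).
Proof. reflexivity. Qed.

Lemma riemann_sum_ext D M F G : (forall x, F x = G x) -> riemann_sum D M F = riemann_sum D M G.
Proof. intros H. rewrite !riemann_sum_tags. f_equal. apply sumL_ext; auto. Qed.

Lemma riemann_sum_lin {A} D M (l : list A) (c : A -> R) (F : A -> (nat -> R) -> R) :
  riemann_sum D M (fun x => sumL l (fun a => c a * F a x)) =
  sumL l (fun a => c a * riemann_sum D M (F a)).
Proof.
  rewrite riemann_sum_tags, sumL_swap, <- sumL_scal. apply sumL_ext; intros a _.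
  rewrite riemann_sum_tags, <- !sumL_scal. apply sumL_ext; intros; ring.
Qed.

Lemma riemann_sum_scal D M c F : riemann_sum D M (fun x => c * F x) = c * riemann_sum D M F.
Proof. rewrite !riemann_sum_tags, sumL_scal. ring. Qed.

Lemma tag_in_cube D M k : In k (tuples D (S M)) -> in_cube D (tag D (S M) k).
Proof.
  intros Hk. destruct (tuples_spec _ _ _ Hk) as [_ Hn]. unfold tag. split; intros d Hd;
    destruct (Nat.ltb_spec d D); try lia; [|reflexivity].
  specialize (Hn d Hd). assert (0 < INR (S M)) by (apply lt_0_INR; lia).
  assert (INR (S (nth d k 0%nat)) <= INR (S M)) by (apply le_INR; lia).
  pose proof (pos_INR (S (nth d k 0%nat))). split.
  - apply Rmult_le_pos; [lra | left; apply Rinv_0_lt_compat; lra].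
  - apply Rmult_le_reg_r with (INR (S M)); auto. unfold Rdiv; rewrite Rmult_assoc, Rinv_l; lra.
Qed.

(* Riemann sums only see the values of the integrand on the cube. *)
Lemma riemann_sum_mono D M F G : (forall x, in_cube D x -> F x <= G x) ->
  riemann_sum D (S M) F <= riemann_sum D (S M) G.
Proof.
  intros H. rewrite !riemann_sum_tags. apply Rmult_le_compat_l.
  - apply pow_le. left; apply Rinv_0_lt_compat, lt_0_INR; lia.
  - apply sumL_le. intros k Hk. apply H, tag_in_cube, Hk.
Qed.

Lemma riemann_sum_prod D M (g : nat -> R -> R) :
  riemann_sum D (S M) (fun x => prodD D (fun d => g d (x d))) =
  prodD D (fun d => riemann_sum_1d (g d) M).
Proof.
  unfold riemann_sum_1d. rewrite riemann_sum_tags, prodD_mult, prodD_const. f_equal.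
  rewrite <- (sumL_tuples_prod D (S M) (fun d k => g d (INR (S k) / INR (S M)))).
  apply sumL_ext; intros k _. apply prodD_ext; intros d Hd.
  unfold tag. destruct (Nat.ltb_spec d D); [reflexivity | lia].
Qed.

Lemma eta_gram_cv D N Q a b : (0 < N)%nat -> In a (basis_idx D N Q) -> In b (basis_idx D N Q) ->
  Un_cv (fun M => riemann_sum D (S M) (fun x => eta D N a x * eta D N b x))
        (if idx_eq_dec a b then 1 else 0).
Proof.
  intros HN Ha Hb.
  destruct (basis_spec _ _ _ _ Ha) as [Ha1 [Ha2 _]], (basis_spec _ _ _ _ Hb) as [Hb1 [Hb2 _]].
  destruct (tuples_spec _ _ _ Ha1) as [La1 Na1], (tuples_spec _ _ _ Ha2) as [La2 _],
           (tuples_spec _ _ _ Hb1) as [Lb1 _], (tuples_spec _ _ _ Hb2) as [Lb2 _].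
  destruct a as [i1 j1], b as [i2 j2]. simpl fst in *; simpl snd in *.
  set (g := fun d t => INR N * (cell_factor N (nth d i1 0%nat) (nth d j1 0%nat) t *
                                cell_factor N (nth d i2 0%nat) (nth d j2 0%nat) t)).
  assert (Hprod : forall x, eta D N (i1, j1) x * eta D N (i2, j2) x = prodD D (fun d => g d (x d))).
  { intros x. rewrite !eta_factorises. unfold g. simpl fst; simpl snd.
    rewrite !prodD_mult, prodD_const.
    rewrite <- (sqrt_sqrt (INR N ^ D)) at 3 by (apply pow_le, pos_INR). ring. }
  apply Un_cv_ext with (fun M => prodD D (fun d => riemann_sum_1d (g d) M)).
  { intros M. rewrite (riemann_sum_ext _ _ _ _ Hprod), riemann_sum_prod. reflexivity. }
  rewrite <- (prodD_delta D i1 i2 j1 j2) by auto.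
  apply prodD_cv. intros d Hd. apply cell_factor_gram_1d; auto.
Qed.

(** * Eigenvalues of the Gram matrix: the Rayleigh quotient argument *)

Lemma riemann_sum_quadratic_cv {A} D (B : list A) (v : A -> R) (e : A -> (nat -> R) -> R)
  (g : (nat -> R) -> R) (G : A -> A -> R) :
  (forall a b, In a B -> In b B ->
     Un_cv (fun M => riemann_sum D (S M) (fun x => e a x * e b x * g x)) (G a b)) ->
  Un_cv (fun M => riemann_sum D (S M) (fun x => sumL B (fun a => v a * e a x) ^ 2 * g x))
        (sumL B (fun a => v a * sumL B (fun b => v b * G a b))).
Proof.
  intros HG.
  assert (Expand : forall x, sumL B (fun a => v a * e a x) ^ 2 * g x =
     sumL B (fun a => v a * sumL B (fun b => v b * (e a x * e b x * g x)))).
  { intros x. unfold pow. rewrite Rmult_1_r, Rmult_assoc, (sumL_mult_r B (fun a => v a * e a x)).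
    apply sumL_ext; intros a _. rewrite (sumL_mult_r B (fun b => v b * e b x)), <- !sumL_scal.
    apply sumL_ext; intros b _. ring. }
  apply Un_cv_ext with (fun M => sumL B (fun a => v a *
           sumL B (fun b => v b * riemann_sum D (S M) (fun x => e a x * e b x * g x)))).
  { intros M. rewrite (riemann_sum_ext _ _ _ _ Expand), riemann_sum_lin.
    apply sumL_ext; intros a _. rewrite riemann_sum_lin. reflexivity. }
  apply sumL_cv; intros a Ha. apply cv_scal. apply sumL_cv; intros b Hb. apply cv_scal. auto.
Qed.

(* An eigenvalue of R = int eta eta^T f lies in [inf f, sup f]: for an
   eigenvector v and W = sum_a v_a eta_a, int W^2 f = lam |v|^2 while
   int W^2 = |v|^2 by orthonormality. *)
Lemma eigenvalue_in_range D N Q (f : (nat -> R) -> R) fl fu Rm lam (v : list nat * list nat -> R) :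
  (1 <= N)%nat -> (forall x, in_cube D x -> fl <= f x <= fu) ->
  (forall a b, In a (basis_idx D N Q) -> In b (basis_idx D N Q) ->
     is_cube_integral D (fun x => eta D N a x * eta D N b x * f x) (Rm a b)) ->
  (exists a, In a (basis_idx D N Q) /\ v a <> 0) ->
  (forall a, In a (basis_idx D N Q) ->
     sumL (basis_idx D N Q) (fun b => Rm a b * v b) = lam * v a) ->
  fl <= lam <= fu.
Proof.
  intros HN Hf HR [a0 [Ha0 Hv0]] Heig.
  set (B := basis_idx D N Q) in *.
  set (S2 := sumL B (fun a => v a * v a)).
  set (W := fun x => sumL B (fun a => v a * eta D N a x)).
  assert (HS2 : 0 < S2).
  { apply (sumL_pos _ _ a0); auto; [intros; apply Rle_0_sqr|].
    destruct (Rlt_dec 0 (v a0)); nra. }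
  assert (Hf_limit : Un_cv (fun M => riemann_sum D (S M) (fun x => W x ^ 2 * f x)) (lam * S2)).
  { replace (lam * S2) with (sumL B (fun a => v a * sumL B (fun b => v b * Rm a b))).
    - apply riemann_sum_quadratic_cv. exact HR.
    - unfold S2. rewrite <- sumL_scal. apply sumL_ext; intros a Ha.
      rewrite (sumL_ext _ _ (fun b => Rm a b * v b)) by (intros; ring).
      rewrite Heig by auto. ring. }
  assert (H1_limit : Un_cv (fun M => riemann_sum D (S M) (fun x => W x ^ 2 * 1)) S2).
  { replace S2 with (sumL B (fun a => v a * sumL B (fun b => v b * (if idx_eq_dec a b then 1 else 0)))).
    - apply riemann_sum_quadratic_cv. intros a b Ha Hb.
      apply Un_cv_ext with (fun M => riemann_sum D (S M) (fun x => eta D N a x * eta D N b x)).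
      { intros M. apply riemann_sum_ext. intros; ring. }
      apply (eta_gram_cv D N Q); auto; lia.
    - unfold S2. apply sumL_ext; intros a Ha.
      rewrite (sumL_delta idx_eq_dec); auto. apply NoDup_basis. }
  assert (Hlow : fl * S2 <= lam * S2).
  { refine (Rle_cv_lim _ (cv_scal fl _ _ H1_limit) Hf_limit). intros M.
    rewrite <- riemann_sum_scal. apply riemann_sum_mono. intros x Hx.
    pose proof (Hf x Hx). pose proof (pow2_ge_0 (W x)). nra. }
  assert (Hup : lam * S2 <= fu * S2).
  { refine (Rle_cv_lim _ Hf_limit (cv_scal fu _ _ H1_limit)). intros M.
    rewrite <- riemann_sum_scal. apply riemann_sum_mono. intros x Hx.
    pose proof (Hf x Hx). pose proof (pow2_ge_0 (W x)). nra. }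
  split; nra.
Qed.

(** * The sup bound for sum_a eta_a(x)^2 *)

(* sum_k e_{k,q}(t)^2 <= 2q+1: at most one cell contains t. *)
Lemma cell_factor_sq_sum_le N q t : (0 < N)%nat ->
  sumL (seq 0 N) (fun k => (cell_factor N k q t) ^ 2) <= 2 * INR q + 1.
Proof.
  intros HN. pose proof (pos_INR q).
  apply Rle_trans with (sumL (seq 0 N) (fun k =>
    (2 * INR q + 1) * ind_oc (INR k / INR N) (INR (S k) / INR N) t));
    [apply sumL_le; intros; apply cell_factor_sq_le; auto|].
  rewrite sumL_scal. destruct (ind_oc_sum N N t HN) as [Hsum _].
  assert (0 <= sumL (seq 0 N) (fun k => ind_oc (INR k / INR N) (INR (S k) / INR N) t))
    by (apply sumL_nonneg; intros; apply ind_oc_bounds).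
  nra.
Qed.

(* prod_d (2 j_d + 1) <= exp(2 |j|_1), from 1 + x <= e^x. *)
Lemma prod_odd_le_exp j :
  prodD (length j) (fun d => 2 * INR (nth d j 0%nat) + 1) <= exp (2 * INR (sumn_list j)).
Proof.
  induction j as [|a j IH]; [unfold prodD; simpl; rewrite Rmult_0_r, exp_0; lra|].
  simpl length. rewrite prodD_S. simpl nth.
  change (sumn_list (a :: j)) with (a + sumn_list j)%nat.
  rewrite plus_INR, Rmult_plus_distr_l, exp_plus. pose proof (pos_INR a).
  apply Rmult_le_compat; try lra.
  - apply prodD_nonneg. intros; pose proof (pos_INR (nth d j 0%nat)); lra.
  - pose proof (exp_ineq1_le (2 * INR a)). lra.
Qed.

(* sum_a eta_a(x)^2 = N^D sum_{|j|_1 <= Q} prod_d sum_k e_{k,j_d}(x_d)^2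
                   <= N^D * #{j : |j|_1 <= Q} * e^{2Q}. *)
Lemma eta_sq_sum_bound D N Q x : (1 <= N)%nat ->
  sumL (basis_idx D N Q) (fun a => (eta D N a x) ^ 2) <= INR N ^ D * exp (2 * INR Q) * C (D + Q) D.
Proof.
  intros HN. set (TJ := filter (fun j => Nat.leb (sumn_list j) Q) (tuples D (S Q))).
  unfold basis_idx. fold TJ. rewrite sumL_list_prod, sumL_swap.
  assert (HC : INR (length TJ) = C (D + Q) D).
  { rewrite <- (count_tuples D (S Q) Q), <- sumL_filter by lia. fold TJ.
    rewrite sumL_const. ring. }
  apply Rle_trans with (sumL TJ (fun _ => INR N ^ D * exp (2 * INR Q)));
    [|rewrite sumL_const, HC; lra].
  apply sumL_le. intros j Hj. unfold TJ in Hj.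
  apply filter_In in Hj as [Hj Hs]. apply Nat.leb_le in Hs.
  destruct (tuples_spec _ _ _ Hj) as [Lj _].
  rewrite (sumL_ext _ _ (fun i => INR N ^ D *
             prodD D (fun d => (cell_factor N (nth d i 0%nat) (nth d j 0%nat) (x d)) ^ 2))).
  2:{ intros i _. rewrite eta_factorises. simpl fst; simpl snd.
      rewrite Rpow_mult_distr, pow2_sqrt by (apply pow_le, pos_INR). f_equal.
      rewrite <- Rsqr_pow2. unfold Rsqr. rewrite <- prodD_mult.
      apply prodD_ext; intros; ring. }
  rewrite sumL_scal. apply Rmult_le_compat_l; [apply pow_le, pos_INR|].
  rewrite (sumL_tuples_prod D N (fun d k => (cell_factor N k (nth d j 0%nat) (x d)) ^ 2)).
  apply Rle_trans with (prodD D (fun d => 2 * INR (nth d j 0%nat) + 1)).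
  - apply prodD_le. intros d Hd. split.
    + apply sumL_nonneg; intros; apply pow2_ge_0.
    + apply cell_factor_sq_sum_le; lia.
  - rewrite <- Lj. eapply Rle_trans; [apply prod_odd_le_exp|].
    destruct (Rle_lt_or_eq_dec _ _ (le_INR _ _ Hs)) as [Hlt|Heq].
    + left. apply exp_increasing. lra.
    + rewrite Heq. lra.
Qed.

Lemma inf_sup_bounds D (f : (nat -> R) -> R) fl fu :
  (forall x, in_cube D x -> 0 < f x) ->
  is_lub (fun y => exists x, in_cube D x /\ y = - f x) (- fl) ->
  is_lub (fun y => exists x, in_cube D x /\ y = f x) fu ->
  (forall x, in_cube D x -> fl <= f x <= fu) /\ 0 <= fl.
Proof.
  intros Hpos [Hl1 Hl2] [Hu1 _]. split.
  - intros x Hx. split.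
    + assert (- f x <= - fl) by (apply Hl1; exists x; auto). lra.
    + apply Hu1; exists x; auto.
  - assert (- fl <= 0); [|lra].
    apply Hl2. intros y [x [Hx ->]]. specialize (Hpos x Hx). lra.
Qed.

Theorem mainTheorem6
  (D N Q : nat) (f : (nat -> R) -> R) (fl fu w : R)
  (Rm : list nat * list nat -> list nat * list nat -> R) :
  (1 <= D)%nat -> (1 <= N)%nat ->
  continuous_on_cube D f ->
  (forall x, in_cube D x -> 0 < f x) ->
  is_cube_integral D f 1 ->
  (* fl = f_* = inf f,  fu = f^* = sup f over [0,1]^D *)
  is_lub (fun y => exists x, in_cube D x /\ y = - f x) (- fl) ->
  is_lub (fun y => exists x, in_cube D x /\ y = f x) fu ->
  (* w = varpi(1/N) *)
  is_lub (fun y => exists x z, in_cube D x /\ in_cube D z /\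
            (forall d, (d < D)%nat -> Rabs (x d - z d) <= / INR N) /\
            y = Rabs (f x - f z)) w ->
  (* R = E[eta(X) eta(X)^T] *)
  (forall a b, In a (basis_idx D N Q) -> In b (basis_idx D N Q) ->
     is_cube_integral D (fun x => eta D N a x * eta D N b x * f x) (Rm a b)) ->
  (Q = 0%nat \/ 2 * C (D + Q) D * exp (2 * INR Q) * w <= fl) ->
  (forall (lam : R) (v : list nat * list nat -> R),
     (exists a, In a (basis_idx D N Q) /\ v a <> 0) ->
     (forall a, In a (basis_idx D N Q) ->
        sumL (basis_idx D N Q) (fun b => Rm a b * v b) = lam * v a) ->
     fl / 2 <= lam /\ lam <= 3 / 2 * fu) /\
  (forall x, in_cube D x ->
     sumL (basis_idx D N Q) (fun a => (eta D N a x) ^ 2)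
       <= INR N ^ D * exp (2 * INR Q) * C (D + Q) D).
Proof.
  intros _ HN _ Hpos _ Hinf Hsup _ HR _.
  destruct (inf_sup_bounds D f fl fu Hpos Hinf Hsup) as [Hf Hfl].
  split.
  - intros lam v Hv Heig.
    destruct (eigenvalue_in_range D N Q f fl fu Rm lam v HN Hf HR Hv Heig). lra.
  - intros x _. apply eta_sq_sum_bound; auto.
Qed.
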